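(* There is an absolute constant $C$ such that the following holds. Let $\sigma\in(0,1]$ and let $\mathcal{I}$ be a finite set of closed intervals on the real line that all contain a common point $p$. If $\mathcal{I}$ is $\sigma$-exposed, then $|\mathcal{I}|\le C/\sigma^2$.
   Context: For sets $X, Y\subseteq\mathbb{R}^d$ and $\sigma>0$, $X$ $\sigma$-shadows $Y$ if $\max_{q\in Y} \mathrm{dist}(q, X) \le \sigma\cdot \mathrm{diam}(Y)$, where $\mathrm{dist}(q,X)=\min_{p\in X}\|q-p\|$. A set of objects is $\sigma$-exposed if no object in the set $\sigma$-shadows another (distinct) object of the set. For intervals, $I=[\ell,r]$ $\sigma$-shadows $I'$ iff $I'\subseteq[\ell-\sigma|I'|,\, r+\sigma|I'|]$, where $|I'|$ is the length of $I'$. *)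

From Stdlib Require Import Reals List.
Open Scope R_scope.

Definition interval := (R * R)%type.
Definition ileft (I : interval) : R := fst I.
Definition iright (I : interval) : R := snd I.
Definition is_interval (I : interval) : Prop := ileft I <= iright I.
Definition ilen (I : interval) : R := iright I - ileft I.
Definition icontains (I : interval) (x : R) : Prop := ileft I <= x <= iright I.

Definition shadows (sigma : R) (I J : interval) : Prop :=
  ileft I - sigma * ilen J <= ileft J /\ iright J <= iright I + sigma * ilen J.

Definition exposed (sigma : R) (S : list interval) : Prop :=
  forall I J, In I S -> In J S -> I <> J -> ~ shadows sigma I J.

(** An interval containing [p] is determined, up to scale, by the relative
    position [t = (p - l) / |I|] of [p] inside it.  If two such intervals have
    relative positions within [σ/2] of each other, the longer one σ-shadows the
    shorter.  Hence in a σ-exposed family the numbers [2t/σ] have pairwise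
    distinct integer parts, and since they lie in [[0, 2/σ]] there are at most
    [2/σ + 1 <= 3/σ^2] of them; the bound is in fact linear in [1/σ]. *)

From Stdlib Require Import Reals List Lra Lia ZArith Classical.
Open Scope R_scope.

Definition relpos (p : R) (I : interval) : R := (p - ileft I) / ilen I.

(* Also holds for degenerate [I], where [relpos] is the junk value [0] and
   [p = ileft I]. *)
Lemma relposE p I : icontains I p -> p - ileft I = relpos p I * ilen I.
Proof.
  unfold relpos, icontains, ilen; intros [Hl Hr].
  destruct (Req_dec (iright I - ileft I) 0) as [E | NE].
  - rewrite E; lra.
  - field; exact NE.
Qed.

Lemma relpos_bounds p I : icontains I p -> 0 <= relpos p I <= 1.
Proof.
  intros HIp; pose proof (relposE p I HIp) as E.
  unfold relpos, icontains, ilen in *; destruct HIp.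
  destruct (Req_dec (iright I - ileft I) 0) as [Z | NZ].
  - rewrite Z; unfold Rdiv; rewrite Rinv_0; lra.
  - split; nra.
Qed.

Lemma shadows_of_relpos_close sigma p I J :
  icontains I p -> icontains J p -> ilen J <= ilen I ->
  Rabs (relpos p I - relpos p J) <= sigma / 2 -> shadows sigma I J.
Proof.
  intros HIp HJp Hlen Hclose.
  pose proof (relposE p I HIp) as EI; pose proof (relposE p J HJp) as EJ.
  destruct (relpos_bounds p I HIp); destruct (relpos_bounds p J HJp).
  pose proof (Rle_abs (relpos p I - relpos p J)).
  pose proof (Rle_abs (relpos p J - relpos p I)) as Hsym.
  rewrite Rabs_minus_sym in Hsym.
  assert (HJ0 : 0 <= ilen J) by (unfold icontains, ilen in *; lra).
  set (t := relpos p I) in *; set (u := relpos p J) in *.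
  assert (t * ilen J <= t * ilen I) by (apply Rmult_le_compat_l; lra).
  assert ((1 - t) * ilen J <= (1 - t) * ilen I) by (apply Rmult_le_compat_l; lra).
  assert (u * ilen J <= (t + sigma / 2) * ilen J) by (apply Rmult_le_compat_r; lra).
  assert ((1 - u) * ilen J <= (1 - t + sigma / 2) * ilen J)
    by (apply Rmult_le_compat_r; lra).
  unfold shadows; unfold ilen in *; split; nra.
Qed.

Lemma exposed_relpos_inj sigma p S I J :
  exposed sigma S -> In I S -> In J S -> icontains I p -> icontains J p ->
  Rabs (relpos p I - relpos p J) <= sigma / 2 -> I = J.
Proof.
  intros Hexp HI HJ HIp HJp Hclose.
  apply NNPP; intro NE.
  destruct (Rle_dec (ilen J) (ilen I)) as [Hle | Hgt].
  - apply (Hexp I J HI HJ NE).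
    exact (shadows_of_relpos_close sigma p I J HIp HJp Hle Hclose).
  - apply (Hexp J I HJ HI (not_eq_sym NE)).
    apply (shadows_of_relpos_close sigma p J I HJp HIp); [lra |].
    rewrite Rabs_minus_sym; exact Hclose.
Qed.

Lemma Int_part_eq_Rabs_lt x y : Int_part x = Int_part y -> Rabs (x - y) < 1.
Proof.
  intros E.
  destruct (base_Int_part x); destruct (base_Int_part y).
  rewrite E in *; apply Rabs_def1; lra.
Qed.

Lemma Int_part_range x b : 0 <= x <= b -> (0 <= Int_part x < up b)%Z.
Proof.
  intros Hx; destruct (base_Int_part x); destruct (archimed b).
  assert (-1 < Int_part x)%Z by (apply lt_IZR; lra).
  split; [lia | apply lt_IZR; lra].
Qed.

(* Pigeonhole over the integer parts [0, ..., up b - 1]. *)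
Lemma length_le_of_Int_part_inj {A : Type} (f : A -> R) (b : R) (S : list A) :
  0 <= b -> NoDup S -> (forall x, In x S -> 0 <= f x <= b) ->
  (forall x y, In x S -> In y S -> Int_part (f x) = Int_part (f y) -> x = y) ->
  INR (length S) <= b + 1.
Proof.
  intros Hb ND Hrange Hinj.
  set (g := fun x => Z.to_nat (Int_part (f x))).
  assert (NDg : NoDup (map g S)).
  { apply NoDup_map_NoDup_ForallPairs; [| exact ND].
    intros x y Hx Hy E; apply Hinj; [exact Hx | exact Hy |].
    pose proof (Int_part_range _ _ (Hrange x Hx));
      pose proof (Int_part_range _ _ (Hrange y Hy)).
    unfold g in E; lia. }
  assert (Hincl : incl (map g S) (seq 0 (Z.to_nat (up b)))).
  { intros k Hk; apply in_map_iff in Hk; destruct Hk as [x [<- Hx]].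
    pose proof (Int_part_range _ _ (Hrange x Hx)).
    apply in_seq; unfold g; lia. }
  pose proof (NoDup_incl_length NDg Hincl) as Hlen.
  rewrite length_map, length_seq in Hlen; apply le_INR in Hlen.
  destruct (archimed b).
  rewrite (INR_IZR_INZ (Z.to_nat (up b))), Z2Nat.id in Hlen
    by (apply le_IZR; lra).
  lra.
Qed.

Lemma two_div_add_one_le sigma : 0 < sigma <= 1 -> 2 / sigma + 1 <= 3 / sigma ^ 2.
Proof.
  intros Hs.
  apply (Rmult_le_reg_r (sigma ^ 2)); [simpl; nra |].
  replace ((2 / sigma + 1) * sigma ^ 2) with (2 * sigma + sigma ^ 2) by (field; lra).
  replace (3 / sigma ^ 2 * sigma ^ 2) with 3 by (field; lra).
  simpl; nra.
Qed.

Theorem mainTheorem4 :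
  exists C : R,
    forall (sigma : R) (S : list interval) (p : R),
      0 < sigma <= 1 ->
      NoDup S ->
      (forall I, In I S -> is_interval I) ->
      (forall I, In I S -> icontains I p) ->
      exposed sigma S ->
      INR (length S) <= C / (sigma ^ 2).
Proof.
  exists 3; intros sigma S p Hs ND _ Hcont Hexp.
  apply Rle_trans with (2 / sigma + 1); [| exact (two_div_add_one_le sigma Hs)].
  assert (0 < / sigma) by (apply Rinv_0_lt_compat; lra).
  apply (length_le_of_Int_part_inj (fun I => 2 * relpos p I / sigma));
    [unfold Rdiv; nra | exact ND | |].
  - intros I HI; destruct (relpos_bounds p I (Hcont I HI)).
    unfold Rdiv; split; [apply Rmult_le_pos | apply Rmult_le_compat_r]; lra.
  - intros I J HI HJ E.
    apply (exposed_relpos_inj sigma p S I J Hexp HI HJ (Hcont I HI) (Hcont J HJ)).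
    apply Int_part_eq_Rabs_lt in E.
    replace (relpos p I - relpos p J)
      with ((2 * relpos p I / sigma - 2 * relpos p J / sigma) * (sigma / 2))
      by (field; lra).
    rewrite Rabs_mult, (Rabs_right (sigma / 2)) by lra.
    rewrite <- (Rmult_1_l (sigma / 2)) at 2.
    apply Rmult_le_compat_r; lra.
Qed.
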